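(* Let $A$ be an $n\times n$ complex matrix with eigenvalues, multiplicities, $P_i$, $N_i$, $B(z)$ and $q_i$ as in the context. Then for every $i\in\{1,\dots,m\}$ and every integer $0\le s\le n_i-1$, $$\frac{d^{s}B(z)}{dz^{s}}\Big|_{z=\lambda_i}= s!\,N_i^{\,n_i-1-s}\,q_i(\lambda_i\mathbb{1}+N_i)\,P_i .$$ In particular, $$\frac{d^{n_i-1}B(z)}{dz^{n_i-1}}\Big|_{z=\lambda_i}=(n_i-1)!\,\prod_{j\ne i}(N_i+(\lambda_i-\lambda_j)\mathbb{1})^{n_j}\,P_i .$$
   Context: For an $n\times n$ complex matrix $A$ with distinct eigenvalues $\lambda_1,\dots,\lambda_m$ and algebraic multiplicities $n_1,\dots,n_m$, let $W_i=\ker(A-\lambda_i\mathbb{1})^{n_i}$ be the generalized eigenspace of $\lambda_i$, so $\mathbb{C}^n=\bigoplus_i W_i$. Let $P_i$ be the projection onto $W_i$ along $\bigoplus_{j\ne i}W_j$, and let $N_i=(A-\lambda_i\mathbb{1})P_i$ (a nilpotent matrix commuting with $P_i$, with $N_i^{n_i}=0$). Let $p(z)=\det(z\mathbb{1}-A)=\prod_{j=1}^m(z-\lambda_j)^{n_j}$, let $B(z)=\operatorname{Adj}(z\mathbb{1}-A)$ be the adjugate (transpose of the cofactor matrix) of $z\mathbb{1}-A$, a matrix polynomial in $z$, and let $q_i(z)=p(z)/(z-\lambda_i)^{n_i}=\prod_{j\ne i}(z-\lambda_j)^{n_j}$. For a polynomial $q$, $q(\lambda_i\mathbb{1}+N_i)$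 is the usual matrix polynomial evaluation. *)

From HB Require Import structures.
From mathcomp Require Import all_boot all_order all_algebra.
Set Implicit Arguments. Unset Strict Implicit. Unset Printing Implicit Defensive.
Import Order.TTheory GRing.Theory Num.Theory.
Local Open Scope ring_scope.

(* Column-vector convention: matrices act on column vectors x : 'cV_n by M *m x. *)

Definition in_gker (C : fieldType) (n : nat) (A : 'M[C]_n) (a : C) (k : nat)
  (x : 'cV[C]_n) : Prop := (A - a%:M) ^+ k *m x = 0.

(* P is the projection onto W_i = ker (A - lam i)^(mult i) along the sum of the
   W_j, j != i: it is the identity on W_i and vanishes on every W_j, j != i.
   (Since C^n is the direct sum of the W_j, this determines P uniquely.) *)
Definition is_spectral_proj (C : fieldType) (n m : nat) (A : 'M[C]_n)
  (lam : 'I_m -> C) (mult : 'I_m -> nat) (i : 'I_m) (P : 'M[C]_n) : Prop :=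
  (forall x, in_gker A (lam i) (mult i) x -> P *m x = x) /\
  (forall j, j != i -> forall x, in_gker A (lam j) (mult j) x -> P *m x = 0).

Definition qi_poly (C : fieldType) (m : nat) (lam : 'I_m -> C) (mult : 'I_m -> nat)
  (i : 'I_m) : {poly C} :=
  \prod_(j < m | j != i) ('X - (lam j)%:P) ^+ mult j.

Definition deriv_eval_mx (C : fieldType) (n : nat) (B : 'M[{poly C}]_n)
  (s : nat) (a : C) : 'M[C]_n :=
  map_mx (fun p => (p^`(s)).[a]) B.

From HB Require Import structures.
From mathcomp Require Import all_boot all_order all_algebra.
From mathcomp Require Import zify.
Set Implicit Arguments. Unset Strict Implicit. Unset Printing Implicit Defensive.
Import Order.TTheory GRing.Theory Num.Theory.
Local Open Scope ring_scope.

(* Fix lambda = lam i, k = mult i, T = A - lambda and q = q_i, so that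
   p(z) = (z - lambda)^k q(z).  Write B'(w) = B(lambda + w).  By Taylor,
   B^(s)(lambda) = s! B'_s, where B'_s is the coefficient of w^s.
   The Cramer identity Adj(M) M = det(M) gives B'(w) (w - T) = w^k q(lambda + w);
   comparing coefficients, B'_(j-1) = B'_j T for j < k, while for j >= k the
   difference B'_(j-1) - B'_j T is a coefficient of q(lambda + w).  Telescoping
   upwards (B' is a polynomial) yields B'_(k-1) = q(A), and downwards
   B'_s = q(A) T^(k-1-s) for s < k.
   Second, Bezout u (X - lambda)^k + v q = 1 shows that C^n = ker (A-lambda)^k
   (+) ker q(A), and the spectral projection P is the polynomial v q in A
   (q(A) annihilates every W_j, j <> i, and ker q(A) is their sum).  Hence P
   is idempotent, commutes with A and q(A) P = q(A); with N = T P this gives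
   N^(k-1-s) q(lambda + N) P = q(A) T^(k-1-s), which is the theorem. *)

Lemma horner_mxMv (K : comNzRingType) (n k : nat) (A : 'M[K]_n.+1)
    (p q : {poly K}) (y : 'M_(n.+1, k)) :
  horner_mx A p *m (horner_mx A q *m y) = horner_mx A (p * q) *m y.
Proof. by rewrite mulmxA mulmxE rmorphM. Qed.

Lemma mx_ext_cV (K : comNzRingType) (n : nat) (M1 M2 : 'M[K]_n.+1) :
  (forall x : 'cV_n.+1, M1 *m x = M2 *m x) -> M1 = M2.
Proof.
move=> eqM; apply/matrixP => a b; have := eqM (delta_mx b 0).
by rewrite -!colE => /(congr1 (fun M : 'cV_n.+1 => M a 0)); rewrite !mxE.
Qed.

Lemma horner_mx_wide (K : comNzRingType) (n : nat) (T : 'M[K]_n.+1)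
    (c : {poly K}) (d : nat) : (size c <= d)%N ->
  horner_mx T c = \sum_(r < d) c`_r *: T ^+ r.
Proof.
move=> le_c_d; have cE : c = \poly_(r < d) c`_r.
  apply/polyP => r; rewrite coef_poly; case: ltnP => // le_d_r.
  exact/nth_default/(leq_trans le_c_d).
rewrite {1}cE poly_def rmorph_sum /=; apply: eq_bigr => r _.
by rewrite linearZ /= rmorphXn /= horner_mx_X.
Qed.

Lemma horner_mx_shift (K : comNzRingType) (n : nat) (M : 'M[K]_n.+1) (a : K)
    (p : {poly K}) :
  horner_mx (a%:M + M) p = horner_mx M (p \Po ('X + a%:P)).
Proof.
elim/poly_ind: p => [|p c IH]; first by rewrite !rmorph0.
rewrite !(rmorphD, rmorphM) /= comp_polyX comp_polyC IH.
by rewrite !(rmorphD, rmorphM) /= !horner_mx_X !horner_mx_C [M + _]addrC addrC.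
Qed.

Section ResolventCoefficients.
Variables (K : comNzRingType) (n : nat) (T : 'M[K]_n.+1).

Let TP := map_mx (@polyC K) T.

Lemma coef_mx_mulC (s : nat) (B : 'M[{poly K}]_n.+1) :
  map_mx (coefp s) (B * TP) = map_mx (coefp s) B * T.
Proof.
apply/matrixP => a b; rewrite !mxE /= coef_sum; apply: eq_bigr => l _.
by rewrite !mxE coefMC.
Qed.

Lemma coef_mul_resolvent (j : nat) (B : 'M[{poly K}]_n.+1) :
  map_mx (coefp j.+1) (B * ('X%:M - TP))
  = map_mx (coefp j) B - map_mx (coefp j.+1) B * T.
Proof.
rewrite mulrBr map_mxB coef_mx_mulC; congr (_ - _).
by apply/matrixP => a b; rewrite -mulmxE mul_mx_scalar !mxE /= coefXM.
Qed.

Lemma resolvent_low_coef (B : 'M[{poly K}]_n.+1) (c : {poly K}) (k : nat) :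
  B * ('X%:M - TP) = ('X^k * c)%:M ->
  forall s, (s < k)%N -> map_mx (coefp s) B = horner_mx T c * T ^+ (k.-1 - s).
Proof.
move=> hB s lt_s_k; set Bc := fun j => map_mx (coefp j) B.
have coef_rec j : Bc j - Bc j.+1 * T = (('X^k * c)`_j.+1)%:M.
  rewrite -coef_mul_resolvent hB.
  by apply/matrixP => a b; rewrite !mxE /= coefMn.
have k_gt0 : (0 < k)%N by apply: leq_ltn_trans lt_s_k.
have below j : (j.+1 < k)%N -> Bc j = Bc j.+1 * T.
  by move=> lt_j_k; apply/eqP; rewrite -subr_eq0 coef_rec coefXnM lt_j_k raddf0.
have above d : Bc (k.-1 + d)%N = (c`_d)%:M + Bc (k + d)%N * T.
  have := coef_rec (k.-1 + d)%N; rewrite -addSn prednK // coefXnM ltnNge leq_addr /=.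
  by rewrite addKn => /eqP; rewrite subr_eq => /eqP.
have telescope d :
    Bc k.-1 = \sum_(r < d) c`_r *: T ^+ r + Bc (k.-1 + d)%N * T ^+ d.
  elim: d => [|d IH]; first by rewrite big_ord0 add0r addn0 mulr1.
  rewrite IH above big_ord_recr mulrDl -addrA -!mulmxE mul_scalar_mx.
  by rewrite -mulmxA mulmxE -exprS -addSnnS prednK.
pose d := (\max_(a < n.+1) \max_(b < n.+1) size (B a b) + size c)%N.
have top_vanish : Bc (k.-1 + d)%N = 0.
  apply/matrixP => a b; rewrite !mxE /=; apply: nth_default.
  apply: leq_trans (leq_addl _ _); apply: leq_trans (leq_addr _ _).
  by apply: leq_trans (leq_bigmax a); apply: (leq_bigmax b).
have top : Bc k.-1 = horner_mx T c.
  rewrite (telescope d) top_vanish mul0r addr0.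
  by rewrite -(horner_mx_wide T (leq_addl _ (size c))).
have down j : (j <= k.-1)%N -> Bc (k.-1 - j)%N = Bc k.-1 * T ^+ j.
  elim: j => [|j IH] le_j; first by rewrite subn0 mulr1.
  rewrite exprSr mulrA -IH ?(ltnW le_j) // -(subnSK le_j) -below //.
  by rewrite subnSK //; lia.
by rewrite -top -down ?leq_subr // subKn // -ltnS prednK.
Qed.

End ResolventCoefficients.

Section Compression.
Variables (K : comNzRingType) (n : nat) (M F : 'M[K]_n.+1).
Hypotheses (MF_comm : M * F = F * M) (F_idem : F * F = F).

Lemma exprM_compress (j : nat) : (M * F) ^+ j * F = M ^+ j * F.
Proof.
elim: j => [|j IH]; first by rewrite !expr0.
by rewrite exprSr -!mulrA F_idem {2}MF_comm mulrA IH -mulrA -MF_comm mulrA -exprSr.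
Qed.

Lemma horner_mx_compress (p : {poly K}) :
  horner_mx (M * F) p * F = horner_mx M p * F.
Proof.
rewrite !(horner_mx_wide _ (leqnn (size p))) !mulr_suml.
by apply: eq_bigr => r _; rewrite -!scalerAl exprM_compress.
Qed.

End Compression.

Lemma derivn_comp_shift (K : comNzRingType) (p : {poly K}) (a : K) (s : nat) :
  (p \Po ('X + a%:P))^`(s) = p^`(s) \Po ('X + a%:P).
Proof.
elim: s p => [|s IH] p //.
by rewrite !derivSn deriv_comp derivD derivX derivC addr0 mulr1 IH.
Qed.

Lemma derivn_taylor (K : comNzRingType) (p : {poly K}) (a : K) (s : nat) :
  (p^`(s)).[a] = s`!%:R * (p \Po ('X + a%:P))`_s.
Proof.
have -> : (p^`(s)).[a] = (p^`(s) \Po ('X + a%:P)).[0].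
  by rewrite horner_comp hornerD hornerX hornerC add0r.
by rewrite -derivn_comp_shift horner_coef0 coef_derivn addn0 ffactnn mulr_natl.
Qed.

Lemma deriv_eval_mx_taylor (K : fieldType) (n : nat) (B : 'M[{poly K}]_n)
    (s : nat) (a : K) :
  deriv_eval_mx B s a
  = s`!%:R *: map_mx (coefp s) (map_mx (comp_poly ('X + a%:P)) B).
Proof. by apply/matrixP => b c; rewrite !mxE /= derivn_taylor. Qed.

Lemma adj_shifted_resolvent (K : comNzRingType) (n : nat) (A : 'M[K]_n.+1) (a : K) :
  map_mx (comp_poly ('X + a%:P)) (\adj (char_poly_mx A))
    * ('X%:M - map_mx polyC (A - a%:M))
  = (char_poly A \Po ('X + a%:P))%:M.
Proof.
have := congr1 (map_mx (comp_poly ('X + a%:P))) (mul_adj_mx (char_poly_mx A)).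
rewrite map_mxM map_scalar_mx mulmxE => <-; congr (_ * _).
have constA : map_mx (comp_poly ('X + a%:P)) (map_mx polyC A) = map_mx polyC A.
  by apply/matrixP => b c; rewrite !mxE comp_polyC.
rewrite /char_poly_mx !map_mxB /= !map_scalar_mx /= comp_polyX constA.
by rewrite (rmorphD (@scalar_mx _ n.+1)) opprB addrA addrAC.
Qed.

Lemma adj_derivn_low (K : fieldType) (n : nat) (A : 'M[K]_n.+1) (a : K)
    (k : nat) (Q : {poly K}) :
  char_poly A = ('X - a%:P) ^+ k * Q ->
  forall s, (s < k)%N ->
  deriv_eval_mx (\adj (char_poly_mx A)) s a
  = s`!%:R *: (horner_mx A Q * (A - a%:M) ^+ (k.-1 - s)).
Proof.
move=> charA s lt_s_k; rewrite deriv_eval_mx_taylor; congr (_ *: _).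
have shifted_char : char_poly A \Po ('X + a%:P) = 'X^k * (Q \Po ('X + a%:P)).
  by rewrite charA !(rmorphM, rmorphXn, rmorphB) /= comp_polyX comp_polyC addrK.
have := adj_shifted_resolvent A a; rewrite shifted_char => /resolvent_low_coef.
move=> /(_ s lt_s_k) ->.
by rewrite -horner_mx_shift addrC subrK.
Qed.

Lemma coprimep_XsubC_pow (K : fieldType) (a b : K) (p q : nat) :
  a != b -> coprimep (('X - a%:P) ^+ p) (('X - b%:P) ^+ q).
Proof.
move=> neq_ab; apply/coprimep_expl/coprimep_expr.
by rewrite coprimep_XsubC root_XsubC eq_sym.
Qed.

Lemma ker_prod_coprime (K : fieldType) (n : nat) (A P : 'M[K]_n.+1)
    (I : finType) (S : {pred I}) (f : I -> {poly K}) :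
  {in S &, forall i j, j != i -> coprimep (f i) (f j)} ->
  (forall j, S j -> forall y : 'cV_n.+1, horner_mx A (f j) *m y = 0 -> P *m y = 0) ->
  forall y : 'cV_n.+1, horner_mx A (\prod_(j | S j) f j) *m y = 0 -> P *m y = 0.
Proof.
move=> f_coprime P_kills; elim: (index_enum I) (index_enum_uniq I) => [|j js IH] /=.
  by move=> _ y; rewrite big_nil rmorph1 mul1mx => ->; rewrite mulmx0.
case/andP=> j_notin_js js_uniq y; rewrite big_cons; case: ifP => [Sj|_]; last exact: IH.
set F := \prod_(l <- js | S l) f l.
have coprime_jF : coprimep (f j) F.
  rewrite /F (@big_morph _ _ _ true andb) ?big_all_cond ?coprimep1 //; last first.
    by move=> p q; rewrite coprimepMr.
  apply/allP => l l_js; apply/implyP => Sl; apply: f_coprime => //.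
  by apply: contraNneq j_notin_js => <-.
case/Bezout_eq1_coprimepP: coprime_jF => [[a b]] /= bezout ker_y.
have -> : y = horner_mx A (a * f j) *m y + horner_mx A (b * F) *m y.
  by rewrite -mulmxDl -rmorphD /= bezout rmorph1 mul1mx.
rewrite mulmxDr (IH js_uniq) ?add0r.
  by apply: (P_kills j Sj); rewrite horner_mxMv mulrCA -horner_mxMv ker_y mulmx0.
by rewrite horner_mxMv mulrCA (mulrC F) -horner_mxMv ker_y mulmx0.
Qed.

(* For R Q coprime with (R Q)(A) = 0 and Bezout u R + v Q = 1, the polynomial
   E = (v Q)(A) is the projection onto ker R(A) along ker Q(A). *)
Section PolynomialProjection.
Variables (K : fieldType) (n : nat) (A : 'M[K]_n.+1) (R Q u v : {poly K}).
Hypotheses (RQ_annihilates : horner_mx A (R * Q) = 0) (bezout : u * R + v * Q = 1).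

Local Notation E := (horner_mx A (v * Q)).

Lemma proj_complement : 1 - E = horner_mx A (u * R).
Proof. by rewrite -(rmorph1 (horner_mx A)) -bezout rmorphD /= addrK. Qed.

Lemma proj_range_ker : horner_mx A R * E = 0.
Proof. by rewrite -rmorphM mulrCA rmorphM /= RQ_annihilates mulr0. Qed.

(* Q(A) already vanishes on ker Q(A), so it is unchanged by E. *)
Lemma proj_Q_fixed : horner_mx A Q * E = horner_mx A Q.
Proof.
have : horner_mx A Q * (1 - E) = 0.
  rewrite proj_complement -rmorphM mulrCA (mulrC Q) rmorphM /=.
  by rewrite RQ_annihilates mulr0.
by rewrite mulrBr mulr1 => /eqP; rewrite subr_eq0 eq_sym => /eqP.
Qed.

Lemma proj_idem : E * E = E.
Proof.
have : E * (1 - E) = 0.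
  rewrite proj_complement -rmorphM mulrCA -mulrA (mulrC Q).
  by rewrite mulrA rmorphM /= RQ_annihilates mulr0.
by rewrite mulrBr mulr1 => /eqP; rewrite subr_eq0 eq_sym => /eqP.
Qed.

Lemma proj_unique (P : 'M[K]_n.+1) :
  (forall x : 'cV_n.+1, horner_mx A R *m x = 0 -> P *m x = x) ->
  (forall x : 'cV_n.+1, horner_mx A Q *m x = 0 -> P *m x = 0) ->
  P = E.
Proof.
move=> P_id P_kills; apply: mx_ext_cV => x.
have -> : P *m x = P *m (E *m x) + P *m ((1 - E) *m x).
  by rewrite -mulmxDr -mulmxDl addrC subrK mul1mx.
have range_ker : horner_mx A R *m (E *m x) = 0.
  by rewrite mulmxA mulmxE proj_range_ker mul0mx.
have compl_ker : horner_mx A Q *m ((1 - E) *m x) = 0.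
  rewrite proj_complement horner_mxMv mulrCA (mulrC Q) rmorphM /=.
  by rewrite RQ_annihilates mulr0 mul0mx.
by rewrite P_id // P_kills // addr0.
Qed.

Lemma proj_nilpotent_part (a : K) (j : nat) :
  let T := A - a%:M in
  (T * E) ^+ j * horner_mx (a%:M + T * E) Q * E = horner_mx A Q * T ^+ j.
Proof.
move=> T; have T_poly : T = horner_mx A ('X - a%:P).
  by rewrite rmorphB /= horner_mx_X horner_mx_C.
have TE_comm : T * E = E * T by rewrite T_poly -!rmorphM mulrC.
have QE_comm : horner_mx A Q * E = E * horner_mx A Q by rewrite -!rmorphM mulrC.
rewrite -mulrA horner_mx_shift horner_mx_compress ?proj_idem //.
rewrite -horner_mx_shift addrC subrK proj_Q_fixed -{1}proj_Q_fixed QE_comm mulrA.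
rewrite exprM_compress ?proj_idem // -mulrA -QE_comm proj_Q_fixed.
by rewrite T_poly -rmorphXn -!rmorphM mulrC.
Qed.

End PolynomialProjection.

Theorem theorem3 (C : numClosedFieldType) (n m : nat) (A : 'M[C]_n.+1)
  (lam : 'I_m -> C) (mult : 'I_m -> nat)
  (lam_inj : injective lam)
  (mult_gt0 : forall j, (0 < mult j)%N)
  (hchar : char_poly A = \prod_(j < m) ('X - (lam j)%:P) ^+ mult j)
  (i : 'I_m) (P : 'M[C]_n.+1)
  (hP : is_spectral_proj A lam mult i P) :
  let N := (A - (lam i)%:M) *m P in
  let B := \adj (char_poly_mx A) in
  (forall s : nat, (s <= mult i - 1)%N ->
     deriv_eval_mx B s (lam i)
     = (s`!)%:R *: (N ^+ (mult i - 1 - s) *m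
                     horner_mx ((lam i)%:M + N) (qi_poly lam mult i) *m P))
  /\
  deriv_eval_mx B (mult i - 1) (lam i)
  = ((mult i - 1)`!)%:R *:
      ((\prod_(j < m | j != i) (N + (lam i - lam j)%:M) ^+ mult j) *m P).
Proof.
move=> N B; have k_gt0 := mult_gt0 i.
set k := mult i in k_gt0 *; set Q := qi_poly lam mult i.
have charRQ : char_poly A = ('X - (lam i)%:P) ^+ k * Q by rewrite hchar (bigD1 i).
have annihil : horner_mx A (('X - (lam i)%:P) ^+ k * Q) = 0.
  by rewrite -charRQ Cayley_Hamilton.
have gker_poly j (x : 'cV_n.+1) : in_gker A (lam j) (mult j) x
    <-> horner_mx A (('X - (lam j)%:P) ^+ mult j) *m x = 0.
  by rewrite /in_gker rmorphXn rmorphB /= horner_mx_X horner_mx_C.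
have /Bezout_eq1_coprimepP [[u v] /= bezout] : coprimep (('X - (lam i)%:P) ^+ k) Q.
  apply: (big_ind (coprimep _)) => [|p q cp cq|j ji]; first exact: coprimep1.
    by rewrite coprimepMr cp cq.
  by apply/coprimep_XsubC_pow; rewrite (inj_eq lam_inj) eq_sym.
have P_poly : P = horner_mx A (v * Q).
  apply: (proj_unique annihil bezout) => [x /gker_poly|]; first exact: hP.1.
  apply: ker_prod_coprime => [j l ji li lj|j ji y /gker_poly]; last exact: hP.2.
  by apply/coprimep_XsubC_pow; rewrite (inj_eq lam_inj) eq_sym.
have deriv_low s : (s < k)%N -> deriv_eval_mx B s (lam i)
    = s`!%:R *: (N ^+ (k.-1 - s) *m horner_mx ((lam i)%:M + N) Q *m P).
  move=> lt_s_k; rewrite (adj_derivn_low charRQ lt_s_k) /N P_poly !mulmxE.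
  by rewrite (proj_nilpotent_part annihil bezout).
rewrite !subn1; split => [s le_s_k|]; first by apply: deriv_low; lia.
rewrite deriv_low ?prednK // subnn expr0 mul1mx rmorph_prod; congr (_ *: (_ *m _)).
apply: eq_bigr => j _; rewrite rmorphXn rmorphB /= horner_mx_X horner_mx_C.
by rewrite (rmorphB (@scalar_mx C n.+1)) addrAC addrC addrA.
Qed.
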